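(* For all $g,b,n\ge0$ the inverse mapping class monoid $\mathcal{IM}_{g,b,n}$ is an inverse monoid, i.e. for every $a\in\mathcal{IM}_{g,b,n}$ there is a unique $c\in\mathcal{IM}_{g,b,n}$ with $aca=a$ and $cac=c$.
   Context: Let $S_{g,b}$ be a compact orientable surface of genus $g$ with $b$ boundary components, and $Q_n$ a fixed set of $n$ interior points. Consider homeomorphisms $f$ of $S_{g,b}$ (fixing the boundary pointwise) together with a subset $\{i_1,\dots,i_k\}\subseteq Q_n$, $0\le k\le n$, that $f$ maps bijectively onto a subset $\{j_1,\dots,j_k\}\subseteq Q_n$. If $h$ maps $\{s_1,\dots,s_l\}\subseteq Q_n$ bijectively onto $\{t_1,\dots,t_l\}\subseteq Q_n$, the composite $h\circ f$ is equipped with the set of those $i_r$ with $f(i_r)\in\{s_1,\dots,s_l\}$ (possibly empty), which it maps bijectively into $Q_n$. The set of isotopy classes of such maps, with this composition, is a monoid denoted $\mathcal{IM}_{g,b,n}$, the inverse mapping class monoid. For $g=0,b=1$ it is the inverse braid monoid. *)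

From HB Require Import structures.
From mathcomp Require Import all_boot all_order all_algebra.
From mathcomp Require Import all_classical all_reals all_analysis.
From mathcomp Require Import Rstruct Rstruct_topology.
From Stdlib Require Import Rdefinitions.
Notation R := Rdefinitions.R.

Set Implicit Arguments.
Unset Strict Implicit.
Unset Printing Implicit Defensive.

Local Open Scope classical_set_scope.
Local Open Scope ring_scope.

Definition is_homeo {X : topologicalType} (f : X -> X) : Prop :=
  continuous f /\ exists g : X -> X, [/\ continuous g, cancel f g & cancel g f].

(* Raw data of an element of IM: a map together with the subset D of the
   marked points (indexed by 'I_n via Q) that it carries into Q. *)
Definition IMdata (X : Type) (n : nat) : Type := ((X -> X) * {set 'I_n})%type.

Definition IMrep {X : topologicalType} (B : set X) (n : nat) (Q : 'I_n -> X)
    (a : IMdata X n) : Prop :=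
  [/\ is_homeo a.1,
      (forall x, B x -> a.1 x = x) &
      (forall i, i \in a.2 -> exists j, a.1 (Q i) = Q j)].

Definition IMcomp {X : Type} (n : nat) (Q : 'I_n -> X) (h f : IMdata X n)
    : IMdata X n :=
  (h.1 \o f.1,
   [set i in f.2 | `[< exists2 j, j \in h.2 & f.1 (Q i) = Q j >]]).

Definition IMisotopic {X : topologicalType} (B : set X) (n : nat)
    (Q : 'I_n -> X) (a a' : IMdata X n) : Prop :=
  a.2 = a'.2 /\
  exists H : R -> X -> X,
    [/\ {within [set p : R * X | (0 <= p.1 <= 1)%R],
           continuous (fun p : R * X => H p.1 p.2)},
        H 0%R = a.1, H 1%R = a'.1 &
        forall t : R, (0 <= t <= 1)%R ->
          [/\ is_homeo (H t),
              (forall x, B x -> H t x = x) &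
              (forall i, i \in a.2 -> H t (Q i) = a.1 (Q i))]].

(** The inverse of the class of (f, D) is the class of (f^-1, f(D)): the two
   required identities already hold on the nose for representatives.  For
   uniqueness, let (c, E) be another quasi-inverse.  An isotopy from f c f to
   f, conjugated by f^-1, is an isotopy from c to f^-1; evaluating the first
   isotopy at the marked points shows that c inverts f on f(D), and then the
   identity c f c = c forces E = f(D). *)
From HB Require Import structures.
From mathcomp Require Import all_boot all_order all_algebra.
From mathcomp Require Import all_classical all_reals all_analysis.
From mathcomp Require Import Rstruct Rstruct_topology.

Set Implicit Arguments.
Unset Strict Implicit.
Unset Printing Implicit Defensive.

Local Open Scope classical_set_scope.
Import Num.Theory Order.TTheory.

Lemma within_continuous_snd (T U V : topologicalType) (f : U -> V)
    (A : set (T * U)) :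
  continuous f -> {within A, continuous (fun p : T * U => f p.2)}.
Proof.
move=> fc; apply: continuous_subspaceT => p.
by apply: (continuous_comp (f := snd)); [exact: cvg_snd | exact: fc].
Qed.

Lemma within_continuous_conj (T U : topologicalType) (g : U -> U)
    (F : T * U -> U) (A : set (T * U)) :
  (forall p y, A p -> A (p.1, y)) -> continuous g ->
  {within A, continuous F} ->
  {within A, continuous (fun p : T * U => g (F (p.1, g p.2)))}.
Proof.
move=> Astab gc /subspace_continuousP Fc; apply/subspace_continuousP => p Ap.
pose phi (q : T * U) := (q.1, g q.2).
have phic : phi @ within A (nbhs p) --> within A (nbhs (phi p)).
  have phi_cvg : phi @ nbhs p --> phi p.
    apply: cvg_pair; first exact: cvg_fst.
    by apply: (continuous_comp (f := snd)); [exact: cvg_snd | exact: gc].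
  move=> W /phi_cvg Wphi.
  exact: (filterS (fun q Wq Aq => Wq (Astab _ _ Aq)) Wphi).
have Fphi := cvg_comp phi F phic (Fc _ (Astab _ _ Ap)).
exact: (cvg_comp _ g Fphi (gc _)).
Qed.

Section InverseMappingClassMonoid.
Variables (X : topologicalType) (B : set X) (n : nat) (Q : 'I_n -> X).

Lemma is_homeo_comp (f g : X -> X) :
  is_homeo f -> is_homeo g -> is_homeo (f \o g).
Proof.
move=> [fc [f' [f'c fK f'K]]] [gc [g' [g'c gK g'K]]]; split.
  by move=> x; apply: continuous_comp; [exact: gc | exact: fc].
exists (g' \o f'); split.
- by move=> x; apply: continuous_comp; [exact: f'c | exact: g'c].
- by move=> x /=; rewrite fK gK.
- by move=> x /=; rewrite g'K f'K.
Qed.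

Lemma IMisotopic_refl (a : IMdata X n) : IMrep B Q a -> IMisotopic B Q a a.
Proof.
case=> ah aB aQ; split=> //; exists (fun=> a.1); split=> //.
by case: ah => ac _; exact: within_continuous_snd.
Qed.

Lemma IMisotopic_marks (a a' : IMdata X n) :
  IMisotopic B Q a a' -> {in a.2, forall i, a'.1 (Q i) = a.1 (Q i)}.
Proof.
move=> [_ [H [_ _ <- Ht]]] i iD.
by have [|_ _ ->] // := Ht 1%R; split; apply/RleP; rewrite ?ler01 ?lexx.
Qed.

Definition marks_image (f : X -> X) (D : {set 'I_n}) : {set 'I_n} :=
  [set j | `[< exists2 i, i \in D & f (Q i) = Q j >]].

Lemma marks_imageP (f : X -> X) (D : {set 'I_n}) (j : 'I_n) :
  reflect (exists2 i, i \in D & f (Q i) = Q j) (j \in marks_image f D).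
Proof. by rewrite inE; exact: asboolP. Qed.

Lemma IMisotopic_conj (f g : X -> X) (a a' : IMdata X n) :
  is_homeo g -> cancel f g -> (forall x, B x -> g x = x) ->
  IMisotopic B Q a a' ->
  IMisotopic B Q (g \o a.1 \o g, marks_image f a.2)
                 (g \o a'.1 \o g, marks_image f a.2).
Proof.
move=> gh fK gB [_ [H [Hc H0 H1 Ht]]]; split=> //.
exists (fun t => g \o H t \o g); split.
- apply: (@within_continuous_conj _ _ g (fun p : R * X => H p.1 p.2)) => //.
  by case: gh.
- by rewrite H0.
- by rewrite H1.
move=> t t01; have [Hh HB HQ] := Ht t t01; split.
- by apply: is_homeo_comp => //; exact: is_homeo_comp.
- by move=> x Bx /=; rewrite gB // HB // gB.
- by move=> j /marks_imageP[i iD <-] /=; rewrite fK HQ.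
Qed.

Section Inverse.
Variables (f g : X -> X) (D : {set 'I_n}).
Hypotheses (aR : IMrep B Q (f, D)) (gc : continuous g).
Hypotheses (fK : cancel f g) (gK : cancel g f).

Let a : IMdata X n := (f, D).
Let inv : IMdata X n := (g, marks_image f D).

Lemma IMrep_inv : IMrep B Q inv.
Proof.
case: aR => [[fc _] fB _]; split=> /=.
- by split=> //; exists f.
- by move=> x Bx; rewrite -{1}(fB x Bx) fK.
- by move=> j /marks_imageP[i _ <-]; exists i; rewrite fK.
Qed.

Lemma IMcomp_inv_l : IMcomp Q a (IMcomp Q inv a) = a.
Proof.
case: aR => _ _ fD; rewrite /IMcomp /=; congr (_, _).
  by apply/funext => x /=; rewrite fK.
apply/setP => i; rewrite !inE; apply/idP/idP => [/andP[/andP[] //]|iD].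
have [j fij] := fD i iD.
rewrite iD; apply/andP; split; apply/asboolP.
  by exists j; [apply/marks_imageP; exists i|].
by exists i; rewrite //= fK.
Qed.

Lemma IMcomp_inv_r : IMcomp Q inv (IMcomp Q a inv) = inv.
Proof.
rewrite /IMcomp /=; congr (_, _); first by apply/funext => x /=; rewrite gK.
apply/setP => j; rewrite !inE; apply/idP/idP => [/andP[/andP[] //]|].
move=> /[dup] jD /asboolP[i iD fij].
rewrite jD; apply/andP; split; apply/asboolP.
  by exists i; rewrite // -fij fK.
by exists j; [rewrite inE | rewrite gK].
Qed.

Section Uniqueness.
Variables (c : X -> X) (E : {set 'I_n}).
Hypothesis cR : IMrep B Q (c, E).
Hypothesis aca : IMisotopic B Q (IMcomp Q a (IMcomp Q (c, E) a)) a.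
Hypothesis cac_marks : (IMcomp Q (c, E) (IMcomp Q a (c, E))).2 = E.
Hypothesis injQ : injective Q.

Let marks_aca : (IMcomp Q a (IMcomp Q (c, E) a)).2 = D.
Proof. by case: aca. Qed.

Lemma quasi_inverse_marks : E = marks_image f D.
Proof.
have Qc : injective c by case: cR => -[_ [c' [_ cK _]]] _ _; exact: can_inj cK.
have cfQ i : i \in D -> c (f (Q i)) = Q i.
  move=> iD; apply: (can_inj fK); apply: esym.
  by apply: (IMisotopic_marks aca); rewrite marks_aca.
apply/setP => j; apply/idP/marks_imageP => [jE|[i iD fij]].
- have := jE; rewrite -{1}cac_marks !inE.
  move=> /andP[/andP[_ /asboolP[k kD ck]] _].
  by exists k => //; apply: Qc; rewrite [RHS]ck cfQ.
- move: iD; rewrite -{1}marks_aca !inE.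
  move=> /andP[/andP[_ /asboolP[j' j'E fij']] _].
  by rewrite (injQ (etrans (esym fij) fij')).
Qed.

Lemma quasi_inverse_isotopic : IMisotopic B Q (c, E) inv.
Proof.
have [gh gB _] := IMrep_inv.
have conj_c : g \o (IMcomp Q a (IMcomp Q (c, E) a)).1 \o g = c.
  by apply/funext => x /=; rewrite gK fK.
have conj_f : g \o a.1 \o g = g by apply/funext => x /=; rewrite gK.
have := IMisotopic_conj gh fK gB aca.
by rewrite conj_c conj_f marks_aca {1}quasi_inverse_marks.
Qed.

End Uniqueness.
End Inverse.
End InverseMappingClassMonoid.

Theorem mainTheorem5 (X : topologicalType) (B : set X) (n : nat)
    (Q : 'I_n -> X) :
  compact [set: X] -> hausdorff_space X ->
  injective Q -> (forall i, ~ B (Q i)) ->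
  forall a : IMdata X n, IMrep B Q a ->
  exists c : IMdata X n,
    [/\ IMrep B Q c,
        IMisotopic B Q (IMcomp Q a (IMcomp Q c a)) a,
        IMisotopic B Q (IMcomp Q c (IMcomp Q a c)) c &
        forall c' : IMdata X n, IMrep B Q c' ->
          IMisotopic B Q (IMcomp Q a (IMcomp Q c' a)) a ->
          IMisotopic B Q (IMcomp Q c' (IMcomp Q a c')) c' ->
          IMisotopic B Q c' c].
Proof.
move=> _ _ injQ _ [f D] aR.
have [[_ [g [gc fK gK]]] _ _] := aR.
have invR := IMrep_inv aR gc fK gK.
exists (g, marks_image Q f D); split=> //.
- by rewrite (IMcomp_inv_l aR fK); exact: IMisotopic_refl.
- by rewrite (IMcomp_inv_r Q D fK gK); exact: IMisotopic_refl.
- move=> [c E] cR aca [cac_marks _].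
  exact: (quasi_inverse_isotopic aR gc fK gK cR aca cac_marks injQ).
Qed.
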